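(* Let $n\ge 3$ and let $\Gamma$ be a signed graph on the $2n$ vertices $V_1\cup V_2$, $V_1=\{u_1,\dots,u_n\}$, $V_2=\{v_1,\dots,v_n\}$, whose only edges are the positive edges of the path $u_1u_2\cdots u_n$ and the positive edges of the path $v_1v_2\cdots v_n$ (so there are no edges between $V_1$ and $V_2$). Let $\Gamma_1$ be obtained from $\Gamma$ by adding a positive edge $u_1u_n$, a negative edge $u_1v_1$ and a positive edge $u_1v_n$. Then: (i) $\Gamma_1$ and its partial transpose $\Gamma_1^{\tau}$ (with respect to the labelled partition $V_1,V_2$) are non-isomorphic and Laplacian cospectral; (ii) let $\Gamma_2$ be obtained from $\Gamma_1$ by changing the sign of the edge $u_{n-1}u_n$ to negative and the sign of the edge $u_1v_1$ to positive, and let $\Gamma_3$ be obtained from $\Gamma_1^{\tau}$ by changing the sign of the edge $u_{n-1}u_n$ to negative. Then $\Gamma_2$ and $\Gamma_3$ are non-isomorphic and Laplacian cospectral.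
   Context: A signed graph $\Gamma=(G,\sigma)$ is a simple graph $G$ with a sign function $\sigma:E(G)\to\{1,-1\}$. Its adjacency matrix $A(\Gamma)=(a_{ij})$ has $a_{ij}=\sigma(v_iv_j)$ if $v_iv_j\in E(G)$ and $0$ otherwise; its Laplacian matrix is $L(\Gamma)=D(G)-A(\Gamma)$, where $D(G)$ is the diagonal matrix of vertex degrees of $G$. Two signed graphs are Laplacian cospectral if their Laplacian matrices have the same spectrum (with multiplicities). Two signed graphs are isomorphic if there is an isomorphism of the underlying graphs preserving the signs of edges. Partial transpose: let $\Gamma$ be a signed graph whose vertex set is the disjoint union of $V_1=\{u_1,\dots,u_n\}$ and $V_2=\{v_1,\dots,v_n\}$ (with these labellings fixed). The partial transpose $\Gamma^{\tau}$ is the signed graph on the same vertex set in which all edges with both ends in $V_1$ or both ends in $V_2$ are kept with their signs, all edges between $V_1$ and $V_2$ are removed, and for every edge $u_iv_j$ of $\Gamma$ with sign $s$, an edge $u_jv_i$ with sign $s$ is added. (Thus $u_jv_i$ is an edge of $\Gamma^\tau$ with sign $s$ iff $u_iv_j$ is an edge of $\Gamma$ with sign $s$; edges $u_iv_i$ are unchanged.) *)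

From mathcomp Require Import all_boot all_order all_algebra all_fingroup.
From mathcomp Require Import algC.
Set Implicit Arguments. Unset Strict Implicit. Unset Printing Implicit Defensive.
Import GRing.Theory Num.Theory.
Local Open Scope ring_scope.

(* A signed graph on the vertex set 'I_m, given by its sign function:
   sg x y = sigma(xy) in {1,-1} if xy is an edge, and 0 otherwise. *)
Definition sgraph (m : nat) := 'I_m -> 'I_m -> int.

Definition adjmx m (s : sgraph m) : 'M[algC]_m := \matrix_(i, j) (s i j)%:~R.
Definition degree m (s : sgraph m) (i : 'I_m) : nat := #|[pred k | s i k != 0]|.
Definition degmx m (s : sgraph m) : 'M[algC]_m :=
  \matrix_(i, j) ((i == j)%:R * (degree s i)%:R).
Definition laplacian m (s : sgraph m) : 'M[algC]_m := degmx s - adjmx s.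

(* Laplacian cospectral: same Laplacian spectrum with multiplicities, i.e.
   the same characteristic polynomial over the algebraically closed algC. *)
Definition lap_cospectral m (s t : sgraph m) : Prop :=
  char_poly (laplacian s) = char_poly (laplacian t).

Definition sg_iso m (s t : sgraph m) : Prop :=
  exists f : {perm 'I_m}, forall x y, t (f x) (f y) = s x y.

(* Vertex labels on 'I_(n+n): u_k is vertex k-1 and v_k is vertex n+k-1
   (k = 1..n), so V1 = {0..n-1}, V2 = {n..2n-1}. *)
Definition uu (k : nat) : nat := k.-1.
Definition vv (n k : nat) : nat := (n + k.-1)%N.

Definition setsign m (s : sgraph m) (a b : nat) (e : int) : sgraph m :=
  fun x y => if ((x == a :> nat) && (y == b :> nat)) ||
                ((x == b :> nat) && (y == a :> nat)) then e else s x y.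

(* Partial transpose w.r.t. V1 = lshift part, V2 = rshift part:
   u_i v_j in Gamma^tau has the sign of u_j v_i in Gamma. *)
Definition ptrans n (s : sgraph (n + n)) : sgraph (n + n) :=
  fun x y => match split x, split y with
  | inl i, inr j => s (lshift n j) (rshift n i)
  | inr j, inl i => s (rshift n i) (lshift n j)
  | _, _ => s x y
  end.

Definition gamma0 (n : nat) : sgraph (n + n) :=
  fun x y => if (((x : nat).+1 == y) || ((y : nat).+1 == x)) &&
                (((x : nat) < n)%N == ((y : nat) < n)%N) then 1 else 0.
Arguments gamma0 : clear implicits.

Definition gamma1 (n : nat) : sgraph (n + n) :=
  setsign (setsign (setsign (gamma0 n) (uu 1) (uu n) 1)
                   (uu 1) (vv n 1) (-1))
          (uu 1) (vv n n) 1.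
Arguments gamma1 : clear implicits.

Definition gamma2 (n : nat) : sgraph (n + n) :=
  setsign (setsign (gamma1 n) (uu n.-1) (uu n) (-1)) (uu 1) (vv n 1) 1.
Arguments gamma2 : clear implicits.

Definition gamma3 (n : nat) : sgraph (n + n) :=
  setsign (ptrans (gamma1 n)) (uu n.-1) (uu n) (-1).
Arguments gamma3 : clear implicits.

(* The Laplacian of each of the four signed graphs is the Laplacian L0 of the
   two disjoint paths plus a perturbation supported on the four path ends
   u_1, u_n, v_1, v_n.  Reversing both paths (R) and exchanging them (W) are
   automorphisms of the two paths, and the diagonal sign matrix E of the two
   sides commutes with the block-diagonal L0, so R, W and E commute with L0.
   Since R^2 = W^2 = E^2 = 1 and R commutes with W and E, the matrices
     S1 = W (1 + R) + (1 - R)      and      S2 = E (1 + R) + W (1 - R)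
   satisfy S^2 = 4; a check on the corners shows S1 L(G1) = L(G1^tau) S1.  For
   (ii), switching at u_n conjugates both Laplacians by the same diagonal sign
   matrix, after which S2 intertwines them.  Matrices intertwined by S with
   det S <> 0 have the same characteristic polynomial.  The graphs are not
   isomorphic because u_1 has degree 4 in G1 and G2, whereas G1^tau and G3
   have maximum degree 3. *)
From mathcomp Require Import all_boot all_order all_algebra all_fingroup.
From mathcomp Require Import algC zify.
Set Implicit Arguments. Unset Strict Implicit. Unset Printing Implicit Defensive.
Import GRing.Theory Num.Theory.
Local Open Scope ring_scope.

Lemma char_poly_intertwine (R : idomainType) m (S A B : 'M[R]_m) :
  \det S != 0 -> S *m A = B *m S -> char_poly A = char_poly B.
Proof.
move=> detS SA; pose Sx := map_mx (@polyC R) S.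
have : char_poly_mx B *m Sx = Sx *m char_poly_mx A.
  by rewrite mulmxBl mulmxBr -!map_mxM -SA mul_scalar_mx mul_mx_scalar.
have detSx : (\det S)%:P != 0 by rewrite polyC_eq0.
by move/(congr1 determinant); rewrite !det_mulmx det_map_mx mulrC => /(mulfI detSx).
Qed.

Lemma det_neq0_sqr_scalar (R : idomainType) m (S : 'M[R]_m) (c : R) :
  c != 0 -> S *m S = c%:M -> \det S != 0.
Proof.
move=> c0 /(congr1 determinant); rewrite det_mulmx det_scalar => detSS.
apply/eqP => detS0; move: detSS; rewrite detS0 mul0r => /esym/eqP.
by rewrite expf_eq0 (negbTE c0) andbF.
Qed.

Lemma char_poly_conj_involution (R : idomainType) m (F M : 'M[R]_m) :
  F *m F = 1%:M -> char_poly (F *m M *m F) = char_poly M.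
Proof.
move=> FF; symmetry; apply: (char_poly_intertwine (det_neq0_sqr_scalar (oner_neq0 R) FF)).
by rewrite -!mulmxA FF mulmx1.
Qed.

Lemma intertwineD (R : pzRingType) m (S A B A' B' : 'M[R]_m) :
  S *m A = A' *m S -> S *m B = B' *m S -> S *m (A + B) = (A' + B') *m S.
Proof. by rewrite mulmxDr mulmxDl => -> ->. Qed.

Lemma sqr_involution_halves (R : pzRingType) (r a b : R) :
  r * r = 1 -> a * a = 1 -> b * b = 1 -> a * r = r * a -> b * r = r * b ->
  (a * (1 + r) + b * (1 - r)) ^+ 2 = 4%:R.
Proof.
move=> rr aa bb ar br; set p := 1 + r; set q := 1 - r.
have rp : r * p = p by rewrite mulrDr mulr1 rr addrC.
have rq : r * q = - q by rewrite mulrBr mulr1 rr opprB.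
have pq : p * q = 0 by rewrite mulrDl mul1r rq subrr.
have qp : q * p = 0 by rewrite mulrBl mul1r rp subrr.
have pp : p * p = p *+ 2 by rewrite mulrDl mul1r rp mulr2n.
have qq : q * q = q *+ 2 by rewrite mulrBl mul1r rq opprK mulr2n.
have commpq x : x * r = r * x -> p * x = x * p /\ q * x = x * q.
  by move=> xr; rewrite /p /q mulrDl mulrDr mulrBl mulrBr mul1r mulr1 xr.
have [pa qa] := commpq a ar; have [pb qb] := commpq b br.
have pDq : p + q = 2%:R by rewrite /p /q addrCA addrK.
clearbody p q; rewrite expr2 mulrDl !mulrDr -!mulrA (mulrA p a) (mulrA p b) (mulrA q a) (mulrA q b).
rewrite pa pb qa qb -!mulrA pp pq qp qq !mulr0 !addr0 add0r !mulrnAr !mulrA aa bb !mul1r.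
by rewrite -mulrnDl pDq -mulrnA.
Qed.

Lemma perm_mx_commute (R : pzRingType) m (s : {perm 'I_m}) (M : 'M[R]_m) :
  (forall i j, M (s i) (s j) = M i j) -> perm_mx s *m M = M *m perm_mx s.
Proof.
move=> Ms; rewrite -row_permE -{2}(invgK s) -col_permE.
by apply/matrixP => i j; rewrite !mxE -[in LHS](permKV s j) Ms.
Qed.

Lemma diag_mx_commute (R : comPzRingType) m (d : 'rV[R]_m) (M : 'M[R]_m) :
  (forall i j, M i j != 0 -> d 0 i = d 0 j) -> diag_mx d *m M = M *m diag_mx d.
Proof.
move=> Md; apply/matrixP => i j; rewrite mul_diag_mx mul_mx_diag !mxE mulrC.
by have [->|/Md ->] := eqVneq (M i j) 0; rewrite ?mulr0 ?mul0r.
Qed.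

Lemma mul_mx_perm (R : pzRingType) m (s : {perm 'I_m}) (M : 'M[R]_m) :
  M *m perm_mx s = col_perm s^-1 M.
Proof. by rewrite col_permE invgK. Qed.

Lemma perm_mx_sqr_id (R : pzRingType) m (s : {perm 'I_m}) :
  (s * s = 1)%g -> perm_mx s * perm_mx s = 1 :> 'M[R]_m.
Proof. by move=> ss; rewrite -[_ * _]perm_mxM ss perm_mx1. Qed.

Section InvolutionPerm.
Variables (m : nat) (f : nat -> nat).
Hypotheses (f_lt : forall x, (x < m)%N -> (f x < m)%N)
           (fK : forall x, (x < m)%N -> f (f x) = x).

Definition involution_ord (i : 'I_m) : 'I_m := Ordinal (f_lt (ltn_ord i)).

Lemma involution_ordK : involutive involution_ord.
Proof. by move=> i; apply: val_inj; rewrite /= fK. Qed.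

Definition involution_perm : {perm 'I_m} := perm (inv_inj involution_ordK).

Lemma involution_permE i : val (involution_perm i) = f i.
Proof. by rewrite permE. Qed.

Lemma involution_perm_sqr : (involution_perm * involution_perm = 1)%g.
Proof. by apply/permP => i; rewrite permM perm1 !permE involution_ordK. Qed.

Lemma involution_permV : involution_perm^-1%g = involution_perm.
Proof. exact/mulg1_eq/involution_perm_sqr. Qed.

End InvolutionPerm.

Definition lapz m (s : sgraph m) : 'M[int]_m :=
  \matrix_(i, j) ((if i == j then (degree s i)%:Z else 0) - s i j).

Lemma laplacian_lapz m (s : sgraph m) : laplacian s = map_mx intr (lapz s).
Proof.
apply/matrixP => i j; rewrite !mxE rmorphB /=.
by case: eqP => _; rewrite ?mul1r ?mul0r ?rmorph0 //= -pmulrn.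
Qed.

Lemma lap_cospectral_lapz m (s t : sgraph m) :
  char_poly (lapz s) = char_poly (lapz t) -> lap_cospectral s t.
Proof. by move=> st; rewrite /lap_cospectral !laplacian_lapz -!map_char_poly st. Qed.

Lemma degree_eq2 m (s t : sgraph m) : s =2 t -> degree s =1 degree t.
Proof. by move=> st i; apply: eq_card => k; rewrite !inE st. Qed.

Lemma lapz_eq2 m (s t : sgraph m) : s =2 t -> lapz s = lapz t.
Proof. by move=> st; apply/matrixP => i j; rewrite !mxE (degree_eq2 st) st. Qed.

Lemma degree_iso m (s t : sgraph m) (f : {perm 'I_m}) :
  (forall x y, t (f x) (f y) = s x y) -> forall x, degree t (f x) = degree s x.
Proof.
move=> tf x; rewrite /degree -!sum1_card (reindex_inj (@perm_inj _ f)) /=.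
by apply: eq_bigl => k; rewrite !inE tf.
Qed.

Lemma lapz_iso m (s t : sgraph m) (f : {perm 'I_m}) :
  (forall x y, t (f x) (f y) = s x y) -> forall x y, lapz t (f x) (f y) = lapz s x y.
Proof. by move=> tf x y; rewrite !mxE (inj_eq (@perm_inj _ f)) (degree_iso tf) tf. Qed.

Lemma not_sg_iso_degree m (s t : sgraph m) (i : 'I_m) :
  (forall j, degree t j < degree s i)%N -> ~ sg_iso s t.
Proof. by move=> lt_ts [f tf]; have := lt_ts (f i); rewrite (degree_iso tf) ltnn. Qed.

Lemma degree_eq_size m (s : sgraph m) (i : 'I_m) (l : seq nat) :
  uniq l -> all (fun y => y < m)%N l -> (forall k : 'I_m, (s i k != 0) = ((k : nat) \in l)) ->
  degree s i = size l.
Proof.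
move=> ul lm sl; rewrite /degree (eq_card (B := [pred k : 'I_m | val k \in l])) => [|k];
  last by rewrite !inE sl.
rewrite cardE -(size_map val); apply: perm_size; apply: uniq_perm => //.
  by rewrite (map_inj_uniq val_inj) enum_uniq.
move=> y; apply/mapP/idP => [[k] | yl]; first by rewrite mem_enum inE => kl ->.
by exists (Ordinal (allP lm y yl)); rewrite ?mem_enum ?inE.
Qed.

Lemma ptrans_reindex n (s : sgraph (n + n)) (x y : 'I_(n + n)) :
  exists x' y' : 'I_(n + n), ptrans s x y = s x' y' /\
    (val x', val y') = if ((x < n) == (y < n))%N then (val x, val y)
                       else if (x < n)%N then (y - n, n + x)%N else (n + y, x - n)%N.
Proof.
rewrite /ptrans; case: splitP => a ->; case: splitP => b ->.
all: eexists; eexists; split; first reflexivity.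
all: by rewrite /= ?ltn_ord ?addKn.
Qed.

(* Case analysis on the innermost [if]s of the goal: each boolean atom of a
   condition is decided by [lia] when possible and split on otherwise
   (substituting equations between variables). *)
Ltac bool_atom b :=
  lazymatch b with
  | true => fail | false => fail
  | (true == ?q) => bool_atom q | (false == ?q) => bool_atom q
  | (?q == true) => bool_atom q | (?q == false) => bool_atom q
  | false && _ => fail | true || _ => fail
  | true && ?q => bool_atom q | false || ?q => bool_atom q
  | ?p && _ => bool_atom p | ?p || _ => bool_atom p | ~~ ?p => bool_atom p
  | (?p == _) => lazymatch type of p with bool => bool_atom p | _ => b end
  | _ => b
  end.

Ltac decide_atom a :=
  let H := fresh "H" in
  first [ (have H : a by lia); progress rewrite H
        | (have H : ~~ a by lia); progress rewrite (negbTE H)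
        | lazymatch a with
          | (_ == _) => case: (boolP a) => H; [try (move/eqP: H => H; subst) |]
          | _ => case: (boolP a) => H
          end; try (exfalso; lia) ].

Ltac decide_ifs :=
  repeat (match goal with
  | |- context[if ?b then _ else _] =>
      lazymatch b with context[if _ then _ else _] => fail | _ =>
        let a := bool_atom b in decide_atom a end
  end; rewrite /=).

Section TwoPaths.
Variable n : nat.

Definition rev_path (x : nat) : nat :=
  if (x < n)%N then (n.-1 - x)%N else ((n + n).-1 - (x - n))%N.
Definition swap_side (x : nat) : nat := if (x < n)%N then (x + n)%N else (x - n)%N.
Definition side (x : nat) : int := if (x < n)%N then 1 else -1.

Lemma rev_path_lt x : (x < n + n)%N -> (rev_path x < n + n)%N.
Proof. by rewrite /rev_path => ?; decide_ifs; lia. Qed.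
Lemma rev_pathK x : (x < n + n)%N -> rev_path (rev_path x) = x.
Proof. by rewrite /rev_path => ?; decide_ifs; lia. Qed.
Lemma swap_side_lt x : (x < n + n)%N -> (swap_side x < n + n)%N.
Proof. by rewrite /swap_side => ?; decide_ifs; lia. Qed.
Lemma swap_sideK x : (x < n + n)%N -> swap_side (swap_side x) = x.
Proof. by rewrite /swap_side => ?; decide_ifs; lia. Qed.
Lemma swap_side_rev x : (x < n + n)%N -> swap_side (rev_path x) = rev_path (swap_side x).
Proof. by rewrite /rev_path /swap_side => ?; decide_ifs; lia. Qed.
Lemma side_rev x : (x < n + n)%N -> side (rev_path x) = side x.
Proof. by rewrite /side /rev_path => ?; decide_ifs; lia. Qed.

Definition rev_perm := involution_perm rev_path_lt rev_pathK.
Definition swap_perm := involution_perm swap_side_lt swap_sideK.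

Lemma side_rev_perm (i : 'I_(n + n)) : side (rev_perm i) = side i.
Proof. by rewrite involution_permE side_rev. Qed.

Definition revmx : 'M[int]_(n + n) := perm_mx rev_perm.
Definition swapmx : 'M[int]_(n + n) := perm_mx swap_perm.
Definition sidemx : 'M[int]_(n + n) := diag_mx (\row_i side i).

Lemma revmx_sqr : revmx * revmx = 1.
Proof. exact/perm_mx_sqr_id/involution_perm_sqr. Qed.
Lemma swapmx_sqr : swapmx * swapmx = 1.
Proof. exact/perm_mx_sqr_id/involution_perm_sqr. Qed.
Lemma sidemx_sqr : sidemx * sidemx = 1.
Proof.
apply/matrixP => i j; rewrite [_ * _]mulmx_diag !mxE /side.
by case: (i == j); case: ifP.
Qed.

Lemma swapmx_revmx : swapmx * revmx = revmx * swapmx.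
Proof.
rewrite -[_ * _]perm_mxM -[revmx * _]perm_mxM; congr perm_mx.
by apply/permP => i; apply: val_inj; rewrite !permM !involution_permE swap_side_rev.
Qed.

Lemma sidemx_revmx : sidemx * revmx = revmx * sidemx.
Proof.
apply: diag_mx_commute => i j; rewrite /perm_mx !mxE.
by case: (rev_perm i =P j) => [<- _|] //; rewrite side_rev_perm.
Qed.

Lemma gamma0_rev x y : gamma0 n (rev_perm x) (rev_perm y) = gamma0 n x y.
Proof.
rewrite /gamma0 !involution_permE /rev_path.
by move: (ltn_ord x) (ltn_ord y); move: (val x) (val y) => a b ? ?; decide_ifs; lia.
Qed.

Lemma gamma0_swap x y : gamma0 n (swap_perm x) (swap_perm y) = gamma0 n x y.
Proof.
rewrite /gamma0 !involution_permE /swap_side.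
by move: (ltn_ord x) (ltn_ord y); move: (val x) (val y) => a b ? ?; decide_ifs; lia.
Qed.

Definition lap_paths := lapz (gamma0 n).

Lemma revmx_lap_paths : GRing.comm revmx lap_paths.
Proof. exact/perm_mx_commute/lapz_iso/gamma0_rev. Qed.
Lemma swapmx_lap_paths : GRing.comm swapmx lap_paths.
Proof. exact/perm_mx_commute/lapz_iso/gamma0_swap. Qed.
Lemma sidemx_lap_paths : GRing.comm sidemx lap_paths.
Proof.
apply: diag_mx_commute => i j; rewrite !mxE /side /gamma0.
by case: (i =P j) => [-> //|_]; case: ifP => [/andP[_ /eqP ->]|]; rewrite ?subrr ?sub0r ?eqxx.
Qed.

Definition intertwiner1 := swapmx *m (1%:M + revmx) + (1%:M - revmx).
Definition intertwiner2 := sidemx *m (1%:M + revmx) + swapmx *m (1%:M - revmx).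

Lemma intertwiner1_sqr : intertwiner1 *m intertwiner1 = 4%:R%:M.
Proof.
have := sqr_involution_halves revmx_sqr swapmx_sqr (mulr1 1) swapmx_revmx (esym (commr1 revmx)).
by rewrite mul1r expr2 rmorph_nat.
Qed.

Lemma intertwiner2_sqr : intertwiner2 *m intertwiner2 = 4%:R%:M.
Proof.
have := sqr_involution_halves revmx_sqr sidemx_sqr swapmx_sqr sidemx_revmx swapmx_revmx.
by rewrite expr2 rmorph_nat.
Qed.

Lemma intertwiner1_lap_paths : intertwiner1 *m lap_paths = lap_paths *m intertwiner1.
Proof.
have LR := commr_sym revmx_lap_paths; have LW := commr_sym swapmx_lap_paths.
have L1 := commr1 lap_paths.
by apply/esym/commrD; [apply: commrM; last apply: commrD | apply: commrB].
Qed.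

Lemma intertwiner2_lap_paths : intertwiner2 *m lap_paths = lap_paths *m intertwiner2.
Proof.
have LR := commr_sym revmx_lap_paths; have LW := commr_sym swapmx_lap_paths.
have LE := commr_sym sidemx_lap_paths; have L1 := commr1 lap_paths.
by apply/esym/commrD; apply: commrM; try apply: commrB; try apply: commrD.
Qed.

Definition corners : seq nat := [:: uu 1; uu n; vv n 1; vv n n].
(* [cidx x = 4] off the corners, where [cornermx T] vanishes since [nth] pads with zeros. *)
Definition cidx (x : nat) : nat := index x corners.
Definition cornermx (T : seq (seq int)) : 'M[int]_(n + n) :=
  \matrix_(i, j) nth 0 (nth [::] T (cidx i)) (cidx j).

(* Laplacians of the edges added to the two paths, rows and columns in the order
   u_1, u_n, v_1, v_n; for [corner2] and [corner3] after switching at u_n. *)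
Definition corner1 : seq (seq int) :=
  [:: [:: 3; -1; 1; -1]; [:: -1; 1; 0; 0]; [:: 1; 0; 1; 0]; [:: -1; 0; 0; 1]].
Definition corner1t : seq (seq int) :=
  [:: [:: 2; -1; 1; 0]; [:: -1; 2; -1; 0]; [:: 1; -1; 2; 0]; [:: 0; 0; 0; 0]].
Definition corner2 : seq (seq int) :=
  [:: [:: 3; 1; -1; -1]; [:: 1; 1; 0; 0]; [:: -1; 0; 1; 0]; [:: -1; 0; 0; 1]].
Definition corner3 : seq (seq int) :=
  [:: [:: 2; 1; 1; 0]; [:: 1; 2; 1; 0]; [:: 1; 1; 2; 0]; [:: 0; 0; 0; 0]].

Lemma cidx_le x : (cidx x <= 4)%N.
Proof. exact: index_size. Qed.

Hypothesis n_ge3 : (3 <= n)%N.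

Lemma cidx_rev (i : 'I_(n + n)) : cidx (rev_perm i) = nth 4%N [:: 1; 0; 3; 2]%N (cidx i).
Proof.
rewrite involution_permE /cidx /corners /rev_path /uu /vv /=.
by move: (val i) (ltn_ord i) => x ?; decide_ifs; lia.
Qed.

Lemma cidx_swap (i : 'I_(n + n)) : cidx (swap_perm i) = nth 4%N [:: 2; 3; 0; 1]%N (cidx i).
Proof.
rewrite involution_permE /cidx /corners /swap_side /uu /vv /=.
by move: (val i) (ltn_ord i) => x ?; decide_ifs; lia.
Qed.

Lemma side_cidx (i : 'I_(n + n)) :
  (cidx i < 4)%N -> side i = if (cidx i < 2)%N then 1 else -1.
Proof.
rewrite /side /cidx /corners /uu /vv /=.
by move: (val i) (ltn_ord i) => x ?; decide_ifs; lia.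
Qed.

Lemma intertwiner1_corner :
  intertwiner1 *m cornermx corner1 = cornermx corner1t *m intertwiner1.
Proof.
rewrite /intertwiner1 /swapmx /revmx.
rewrite !(mulmxDl, mulmxDr, mulNmx, mulmxN, mul1mx, mulmx1) ![in RHS]mulmxA -![in LHS]mulmxA.
rewrite -!row_permE !mul_mx_perm !involution_permV; apply/matrixP => i j; rewrite !mxE.
rewrite !(cidx_rev, cidx_swap).
move: (cidx_le i) (cidx_le j); move: (cidx i) (cidx j) => a b.
by case: a => [|[|[|[|[|a]]]]]; case: b => [|[|[|[|[|b]]]]].
Qed.

Lemma intertwiner2_corner :
  intertwiner2 *m cornermx corner2 = cornermx corner3 *m intertwiner2.
Proof.
rewrite /intertwiner2 /sidemx /swapmx /revmx.
rewrite !(mulmxDl, mulmxDr, mulNmx, mulmxN, mul1mx, mulmx1) ![in RHS]mulmxA -![in LHS]mulmxA.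
rewrite -!row_permE !mul_mx_perm !involution_permV !mul_diag_mx !mul_mx_diag.
apply/matrixP => i j; rewrite !mxE side_rev_perm !(cidx_rev, cidx_swap).
move: (cidx_le i) (cidx_le j) (@side_cidx i) (@side_cidx j).
move: (cidx i) (cidx j) (side i) (side j) => a b si sj.
case: a => [|[|[|[|[|a]]]]]; case: b => [|[|[|[|[|b]]]]] => // _ _ ia jb.
all: try rewrite (ia isT); try rewrite (jb isT); rewrite /=; lia.
Qed.

Definition gamma1t : sgraph (n + n) :=
  setsign (setsign (setsign (gamma0 n) (uu 1) (uu n) 1) (uu 1) (vv n 1) (-1)) (uu n) (vv n 1) 1.

Lemma ptrans_gamma1 : ptrans (gamma1 n) =2 gamma1t.
Proof.
move=> i j; have [i' [j' [-> ij']]] := ptrans_reindex (gamma1 n) i j.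
have := ltn_ord i'; have := ltn_ord j'.
rewrite /gamma1 /gamma1t /setsign /gamma0 /uu /vv.
move: ij'; case: ifP => c1; [|case: ifP => c2]; case=> -> ->; move: c1; try move: c2.
all: by move: (val i) (val j) (ltn_ord i) (ltn_ord j) => x y *; decide_ifs; lia.
Qed.

Definition path_nbrs (x : nat) : seq nat :=
  if x == uu 1 then [:: 1%N] else if x == vv n 1 then [:: n.+1]
  else if (x == uu n) || (x == vv n n) then [:: x.-1] else [:: x.-1; x.+1].
Definition added1 (x : nat) : seq nat :=
  if x == uu 1 then [:: uu n; vv n 1; vv n n]
  else if (x == uu n) || (x == vv n 1) || (x == vv n n) then [:: uu 1] else [::].
Definition added1t (x : nat) : seq nat :=
  if x == uu 1 then [:: uu n; vv n 1] else if x == uu n then [:: uu 1; vv n 1]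
  else if x == vv n 1 then [:: uu 1; uu n] else [::].

Lemma path_nbrs_wf x : (x < n + n)%N ->
  uniq (path_nbrs x) && all (fun y => y < n + n)%N (path_nbrs x).
Proof. by rewrite /path_nbrs /uu /vv => ?; decide_ifs; rewrite ?inE; lia. Qed.

Lemma nbrs1_wf x : (x < n + n)%N ->
  uniq (path_nbrs x ++ added1 x) && all (fun y => y < n + n)%N (path_nbrs x ++ added1 x).
Proof. by rewrite /path_nbrs /added1 /uu /vv => ?; decide_ifs; rewrite ?inE; lia. Qed.

Lemma nbrs1t_wf x : (x < n + n)%N ->
  uniq (path_nbrs x ++ added1t x) && all (fun y => y < n + n)%N (path_nbrs x ++ added1t x).
Proof. by rewrite /path_nbrs /added1t /uu /vv => ?; decide_ifs; rewrite ?inE; lia. Qed.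

Lemma degree_gamma0 (i : 'I_(n + n)) : degree (gamma0 n) i = size (path_nbrs i).
Proof.
have /andP[? ?] := path_nbrs_wf (ltn_ord i); apply: degree_eq_size => // k.
rewrite /gamma0 /path_nbrs /uu /vv.
move: (nat_of_ord i) (nat_of_ord k) (ltn_ord i) (ltn_ord k) => x y *.
by decide_ifs; rewrite ?(inE, in_nil); apply/idP/idP; lia.
Qed.

Lemma degree_gamma1 (i : 'I_(n + n)) : degree (gamma1 n) i = size (path_nbrs i ++ added1 i).
Proof.
have /andP[? ?] := nbrs1_wf (ltn_ord i); apply: degree_eq_size => // k.
rewrite /gamma1 /setsign /gamma0 /path_nbrs /added1 /uu /vv mem_cat.
move: (nat_of_ord i) (nat_of_ord k) (ltn_ord i) (ltn_ord k) => x y *.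
by decide_ifs; rewrite ?(inE, in_nil); apply/idP/idP; lia.
Qed.

Lemma degree_gamma2 (i : 'I_(n + n)) : degree (gamma2 n) i = size (path_nbrs i ++ added1 i).
Proof.
have /andP[? ?] := nbrs1_wf (ltn_ord i); apply: degree_eq_size => // k.
rewrite /gamma2 /gamma1 /setsign /gamma0 /path_nbrs /added1 /uu /vv mem_cat.
move: (nat_of_ord i) (nat_of_ord k) (ltn_ord i) (ltn_ord k) => x y *.
by decide_ifs; rewrite ?(inE, in_nil); apply/idP/idP; lia.
Qed.

Lemma degree_gamma1t (i : 'I_(n + n)) : degree gamma1t i = size (path_nbrs i ++ added1t i).
Proof.
have /andP[? ?] := nbrs1t_wf (ltn_ord i); apply: degree_eq_size => // k.
rewrite /gamma1t /setsign /gamma0 /path_nbrs /added1t /uu /vv mem_cat.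
move: (nat_of_ord i) (nat_of_ord k) (ltn_ord i) (ltn_ord k) => x y *.
by decide_ifs; rewrite ?(inE, in_nil); apply/idP/idP; lia.
Qed.

Lemma degree_gamma3 (i : 'I_(n + n)) : degree (gamma3 n) i = size (path_nbrs i ++ added1t i).
Proof.
have /andP[? ?] := nbrs1t_wf (ltn_ord i); apply: degree_eq_size => // k.
rewrite /gamma3 {1}/setsign ptrans_gamma1 /gamma1t /setsign /gamma0 /path_nbrs /added1t.
rewrite /uu /vv mem_cat; move: (nat_of_ord i) (nat_of_ord k) (ltn_ord i) (ltn_ord k) => x y *.
by decide_ifs; rewrite ?(inE, in_nil); apply/idP/idP; lia.
Qed.

Lemma size_nbrs1_u1 : size (path_nbrs (uu 1) ++ added1 (uu 1)) = 4%N.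
Proof. by rewrite /path_nbrs /added1 eqxx. Qed.

Lemma size_nbrs1t_lt x : (size (path_nbrs x ++ added1t x) < 4)%N.
Proof. by rewrite /path_nbrs /added1t /uu /vv; decide_ifs. Qed.

Lemma lapz_gamma1 : lapz (gamma1 n) = lap_paths + cornermx corner1.
Proof.
apply/matrixP => i j; rewrite !mxE degree_gamma1 degree_gamma0 -val_eqE /=.
rewrite /gamma1 /setsign /gamma0 /path_nbrs /added1 /cidx /corners /uu /vv /=.
move: (nat_of_ord i) (nat_of_ord j) (ltn_ord i) (ltn_ord j) => x y *.
by decide_ifs; lia.
Qed.

Lemma lapz_gamma1t : lapz gamma1t = lap_paths + cornermx corner1t.
Proof.
apply/matrixP => i j; rewrite !mxE degree_gamma1t degree_gamma0 -val_eqE /=.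
rewrite /gamma1t /setsign /gamma0 /path_nbrs /added1t /cidx /corners /uu /vv /=.
move: (nat_of_ord i) (nat_of_ord j) (ltn_ord i) (ltn_ord j) => x y *.
by decide_ifs; lia.
Qed.

Definition flip_un (x : nat) : int := if x == uu n then -1 else 1.
Definition flipmx : 'M[int]_(n + n) := diag_mx (\row_i flip_un i).

Lemma flipmx_sqr : flipmx *m flipmx = 1%:M.
Proof.
apply/matrixP => i j; rewrite mulmx_diag !mxE /flip_un.
by case: (i == j); case: ifP.
Qed.

Lemma lapz_gamma2 : lapz (gamma2 n) = flipmx *m (lap_paths + cornermx corner2) *m flipmx.
Proof.
apply/matrixP => i j; rewrite mul_mx_diag mul_diag_mx !mxE.
rewrite degree_gamma2 degree_gamma0 -val_eqE /=.
rewrite /gamma2 /gamma1 /setsign /gamma0 /flip_un /path_nbrs /added1 /cidx /corners /uu /vv /=.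
move: (nat_of_ord i) (nat_of_ord j) (ltn_ord i) (ltn_ord j) => x y *.
by decide_ifs; lia.
Qed.

Lemma lapz_gamma3 : lapz (gamma3 n) = flipmx *m (lap_paths + cornermx corner3) *m flipmx.
Proof.
apply/matrixP => i j; rewrite mul_mx_diag mul_diag_mx !mxE.
rewrite degree_gamma3 degree_gamma0 -val_eqE /= /gamma3 {1}/setsign ptrans_gamma1.
rewrite /gamma1t /setsign /gamma0 /flip_un /path_nbrs /added1t /cidx /corners /uu /vv /=.
move: (nat_of_ord i) (nat_of_ord j) (ltn_ord i) (ltn_ord j) => x y *.
by decide_ifs; lia.
Qed.

End TwoPaths.

Theorem theorem3p1 (n : nat) (hn : (3 <= n)%N) :
  (~ sg_iso (gamma1 n) (ptrans (gamma1 n)) /\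
     lap_cospectral (gamma1 n) (ptrans (gamma1 n))) /\
  (~ sg_iso (gamma2 n) (gamma3 n) /\ lap_cospectral (gamma2 n) (gamma3 n)).
Proof.
have u1_lt : (uu 1 < n + n)%N by rewrite /uu; lia.
have four_neq0 : 4%:R != 0 :> int by [].
split; split.
- apply: (not_sg_iso_degree (i := Ordinal u1_lt)) => j.
  rewrite (degree_eq2 (ptrans_gamma1 hn)) (degree_gamma1t hn) (degree_gamma1 hn).
  by rewrite size_nbrs1_u1 size_nbrs1t_lt.
- apply: lap_cospectral_lapz.
  rewrite (lapz_eq2 (ptrans_gamma1 hn)) (lapz_gamma1 hn) (lapz_gamma1t hn).
  apply: (char_poly_intertwine (det_neq0_sqr_scalar four_neq0 (intertwiner1_sqr n))).
  exact: intertwineD (intertwiner1_lap_paths n) (intertwiner1_corner hn).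
- apply: (not_sg_iso_degree (i := Ordinal u1_lt)) => j.
  by rewrite (degree_gamma3 hn) (degree_gamma2 hn) size_nbrs1_u1 size_nbrs1t_lt.
- apply: lap_cospectral_lapz.
  rewrite (lapz_gamma2 hn) (lapz_gamma3 hn) !char_poly_conj_involution ?flipmx_sqr //.
  apply: (char_poly_intertwine (det_neq0_sqr_scalar four_neq0 (intertwiner2_sqr n))).
  exact: intertwineD (intertwiner2_lap_paths n) (intertwiner2_corner hn).
Qed.
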